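(* Let $J\subseteq\mathbb{M}_2$ be a bigraded ideal and $f:\Sigma^{p,q}J\to\mathbb{M}_2$ a nonzero bigraded $\mathbb{M}_2$-module homomorphism. Then exactly one of the following holds: (I) $J$ is of type I and either (i) there are $m,n\ge0$ with $\rho^m\tau^n\in J$ and $f(\rho^m\tau^n)=\rho^a\tau^b$ for some $a\ge m$, $b\ge n$; or (ii) there are $m,n\ge0$ with $\rho^m\tau^n\in J$ and $f(\rho^m\tau^n)=\frac{\theta}{\rho^a\tau^b}$ for some $a,b\ge0$; (II) $J$ is of type II and there are $m,n\ge0$ with $\frac{\theta}{\rho^m\tau^n}\in J$ and $f\big(\frac{\theta}{\rho^m\tau^n}\big)=\frac{\theta}{\rho^a\tau^b}$ for some $0\le a\le m$, $0\le b\le n$.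
   Context: $\mathbb{M}_2$ is the bigraded commutative $\mathbb{F}_2$-algebra with $\mathbb{F}_2$-basis the elements $\rho^m\tau^n$ ($m,n\ge0$) in bidegree $(m,m+n)$ and $\frac{\theta}{\rho^m\tau^n}$ ($m,n\ge 0$) in bidegree $(-m,-2-m-n)$; multiplication: $\rho^a\tau^b\cdot\rho^c\tau^d=\rho^{a+c}\tau^{b+d}$, $\rho^a\tau^b\cdot\frac{\theta}{\rho^c\tau^d}=\frac{\theta}{\rho^{c-a}\tau^{d-b}}$ if $a\le c,b\le d$ and $0$ otherwise, and the product of two elements of the form $\frac{\theta}{\rho^c\tau^d}$ is $0$. $\mathbb{M}_2^+$ is the span of the $\rho^m\tau^n$ and $\mathbb{M}_2^-$ the span of the $\frac{\theta}{\rho^m\tau^n}$. A bigraded ideal $J$ is of type I if it is generated by finitely many homogeneous elements of $\mathbb{M}_2^+$ and $J\cap\mathbb{M}_2^-=\mathbb{M}_2^-$, and of type II if $J\cap\mathbb{M}_2^+=0$ (every bigraded ideal is of one of these types). $\Sigma^{p,q}J$ is the shift with $(\Sigma^{p,q}J)^{a,b}=J^{a-p,b-q}$; module maps preserve bidegree. *)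

From HB Require Import structures.
From mathcomp Require Import all_boot all_order all_algebra.
Set Implicit Arguments. Unset Strict Implicit. Unset Printing Implicit Defensive.
Import Order.TTheory GRing.Theory Num.Theory.

(* Basis monomials: (true, m, n)  stands for  rho^m tau^n,                 *)
(*                  (false, m, n) stands for  theta / (rho^m tau^n).       *)
(* An element of M_2 is a finite F_2-linear combination of monomials,      *)
(* represented canonically by the list of monomials with coefficient 1,    *)
(* strictly sorted by their (injective) code [pickle].                     *)

Definition Basis := (bool * nat * nat)%type.

Definition M2 := {s : seq Basis | sorted ltn (map pickle s)}.

Definition normalize (s : seq Basis) : seq Basis :=
  sort (fun a b => pickle a <= pickle b)
       [seq b <- undup s | odd (count_mem b s)].

Lemma normalize_sorted s : sorted ltn (map pickle (normalize s)).
Proof.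
rewrite ltn_sorted_uniq_leq; apply/andP; split.
  rewrite (map_inj_uniq (@pcan_inj _ _ _ _ (@pickleK _))) sort_uniq.
  by apply: filter_uniq; apply: undup_uniq.
rewrite sorted_map; apply: sort_sorted => a b; exact: leq_total.
Qed.

Definition mk (s : seq Basis) : M2 := exist _ (normalize s) (normalize_sorted s).

Definition m0 : M2 := exist _ [::] isT.
Definition madd (x y : M2) : M2 := mk (val x ++ val y).

(* product of basis monomials (None = 0) *)
Definition mulB (a b : Basis) : option Basis :=
  match a, b with
  | (true, m, n), (true, m', n') => Some (true, m + m', n + n')
  | (true, m, n), (false, c, d) =>
      if (m <= c) && (n <= d) then Some (false, c - m, d - n) else None
  | (false, c, d), (true, m, n) =>
      if (m <= c) && (n <= d) then Some (false, c - m, d - n) else None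
  | (false, _, _), (false, _, _) => None
  end.

Definition mmul (x y : M2) : M2 :=
  mk (pmap id [seq mulB a b | a <- val x, b <- val y]).

Definition mono (b : Basis) : M2 := exist _ [:: b] isT.
Definition rt (m n : nat) : M2 := mono (true, m, n).
Definition th (m n : nat) : M2 := mono (false, m, n).

Definition deg (b : Basis) : int * int :=
  match b with
  | (true, m, n) => ((m%:Z)%R, ((m + n)%N%:Z)%R)
  | (false, m, n) => ((- m%:Z)%R, (- 2 - m%:Z - n%:Z)%R)
  end.

(* x is homogeneous of bidegree d (0 is homogeneous of every bidegree) *)
Definition homog (d : int * int) (x : M2) : bool :=
  all (fun b => deg b == d) (val x).

Definition comp (d : int * int) (x : M2) : M2 :=
  mk [seq b <- val x | deg b == d].

Definition inPlus (x : M2) : bool := all (fun b : Basis => b.1.1) (val x).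
Definition inMinus (x : M2) : bool := all (fun b : Basis => ~~ b.1.1) (val x).

(* bigraded ideal: an ideal which is the sum of its homogeneous parts *)
Definition bigraded_ideal (J : M2 -> Prop) : Prop :=
  [/\ J m0,
      (forall x y, J x -> J y -> J (madd x y)),
      (forall r x, J x -> J (mmul r x)) &
      (forall d x, J x -> J (comp d x))].

Definition gen_by (gs : seq M2) (x : M2) : Prop :=
  exists cs : seq M2, size cs = size gs /\
    x = foldr madd m0 [seq mmul c.1 c.2 | c <- zip cs gs].

Definition typeI (J : M2 -> Prop) : Prop :=
  (exists gs : seq M2,
      (forall g, g \in gs -> inPlus g /\ exists d, homog d g) /\
      (forall x, J x <-> gen_by gs x)) /\
  (forall x, inMinus x -> J x).

Definition typeII (J : M2 -> Prop) : Prop :=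
  forall x, J x -> inPlus x -> x = m0.

(* bigraded M_2-module map  Sigma^{p,q} J -> M_2, given as a function on   *)
(* M_2 whose restriction to J is the map (values off J are irrelevant). *)
Definition bigraded_hom (J : M2 -> Prop) (p q : int) (f : M2 -> M2) : Prop :=
  [/\ (forall x y, J x -> J y -> f (madd x y) = madd (f x) (f y)),
      (forall r x, J x -> f (mmul r x) = mmul r (f x)) &
      (forall s w x, J x -> homog (s, w) x -> homog ((s + p)%R, (w + q)%R) (f x))].

From Pilot Require Import Defs.
From mathcomp Require Import all_boot all_order all_algebra zify.
From Stdlib Require Import Classical.
Set Implicit Arguments. Unset Strict Implicit. Unset Printing Implicit Defensive.

(* A bigraded ideal contains every monomial of each of its elements, and a
   bigraded map sends a monomial u to 0 or to a single monomial, whose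
   annihilator contains that of u by M_2-linearity.  If J is of type II, pick
   u = theta/(rho^m tau^n) in J with f(u) <> 0; then f(u) = theta/(rho^a tau^b),
   and since rho^(m+1) and tau^(n+1) kill u, a <= m and b <= n.  Otherwise J
   contains some rho^i tau^j, hence all of M_2^-, and is finitely generated by
   Dickson's lemma; f is nonzero on some rho^m tau^n, and if f(rho^m tau^n) =
   rho^a tau^b then theta/(rho^a tau^(b+n)) and theta/(rho^(a+m) tau^b) kill
   rho^m tau^n, forcing m <= a and n <= b.  A type I ideal contains a nonzero
   element of M_2^+, so the two cases exclude each other. *)

Lemma sorted_pickle_uniq (s : seq Basis) : sorted ltn (map pickle s) -> uniq s.
Proof.
rewrite -(map_inj_uniq (pcan_inj (@pickleK _))) => Hs.
by have := sorted_uniq ltn_trans ltnn Hs.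
Qed.

Lemma val_M2_uniq (x : M2) : uniq (val x).
Proof. by case: x => s /= /sorted_pickle_uniq. Qed.

Lemma eq_M2 (x y : M2) : val x =i val y -> x = y.
Proof.
case: x y => s Hs [t Ht] /= Est; apply: val_inj => /=.
apply: (inj_map (pcan_inj (@pickleK _))).
apply: (irr_sorted_eq ltn_trans ltnn Hs Ht) => k.
by apply/mapP/mapP => -[b Hb ->]; exists b; rewrite ?Est // -Est.
Qed.

Lemma mem_mk s b : (b \in val (mk s)) = odd (count_mem b s).
Proof.
rewrite /= /normalize mem_sort mem_filter mem_undup.
case: (boolP (b \in s)) => [_|Hb]; first by rewrite andbT.
by rewrite andbF; move: Hb; rewrite -has_pred1 has_count -leqNgt leqn0 => /eqP ->.
Qed.

Lemma mk_sorted s : sorted ltn (map pickle s) -> val (mk s) = s.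
Proof.
move=> Hs; have Us := sorted_pickle_uniq Hs.
rewrite /= /normalize undup_id //.
have -> : [seq b <- s | odd (count_mem b s)] = s.
  by apply/all_filterP/allP => b Hb; rewrite count_uniq_mem ?Hb.
apply: sorted_sort; first by move=> a b c; apply: leq_trans.
by rewrite sorted_map in Hs; apply: sub_sorted Hs => a b /ltnW.
Qed.

Lemma mk_nil : mk [::] = m0.
Proof. by apply: val_inj; rewrite mk_sorted. Qed.

Lemma mk_mono b : mk [:: b] = mono b.
Proof. by apply: val_inj; rewrite mk_sorted. Qed.

Lemma mono_neq0 b : mono b <> m0.
Proof. by move/(f_equal val). Qed.

Lemma mem_madd x y b : (b \in val (madd x y)) = (b \in val x) (+) (b \in val y).
Proof.
rewrite mem_mk count_cat !count_uniq_mem ?val_M2_uniq // oddD.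
by case: (b \in val x); case: (b \in val y).
Qed.

Lemma madd0l x : madd m0 x = x.
Proof. by apply: eq_M2 => b; rewrite mem_madd. Qed.

Lemma madd0r x : madd x m0 = x.
Proof. by apply: eq_M2 => b; rewrite mem_madd addbF. Qed.

Lemma maddxx x : madd x x = m0.
Proof. by apply: eq_M2 => b; rewrite mem_madd addbb. Qed.

Lemma maddACA x y z w : madd (madd x y) (madd z w) = madd (madd x z) (madd y w).
Proof. by apply: eq_M2 => b; rewrite !mem_madd addbACA. Qed.

Lemma mmul_mono a b :
  mmul (mono a) (mono b) = if mulB a b is Some c then mono c else m0.
Proof. by rewrite /mmul /=; case: (mulB a b) => [c|] /=; rewrite ?mk_mono ?mk_nil. Qed.

Lemma mmul0l y : mmul m0 y = m0.
Proof. by rewrite /mmul /= mk_nil. Qed.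

Lemma mmul0r y : mmul y m0 = m0.
Proof. by rewrite /mmul /= (allpairs0r (fun a b => mulB a b)) mk_nil. Qed.

Lemma th_mul_rt c d i j : mmul (th (c + i) (d + j)) (rt i j) = th c d.
Proof. by rewrite mmul_mono /= !leq_addl !addnK. Qed.

Definition dvd_rt (i j : nat) (b : Basis) : bool :=
  if b is (true, m, n) then (i <= m) && (j <= n) else true.

Definition div_rt (i j : nat) (b : Basis) : Basis :=
  match b with
  | (true, m, n) => (true, m - i, n - j)
  | (false, c, d) => (false, c + i, d + j)
  end.

Lemma mulB_rtE i j a b :
  (mulB a (true, i, j) == Some b) = dvd_rt i j b && (a == div_rt i j b).
Proof.
case: a => [[[] m n]]; case: b => [[[] c d]] /=.
- apply/eqP/andP => [[<- <-]|[/andP[Hi Hj] /eqP[-> ->]]].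
    by rewrite !addnK !leq_addl.
  by rewrite !subnK.
- by rewrite !xpair_eqE /= ?andbF.
- by case: ifP => _; rewrite !xpair_eqE ?andbF.
- case: ifP => [/andP[Hi Hj]|Hij].
    by apply/eqP/eqP => [[<- <-]|[-> ->]]; rewrite ?subnK ?addnK.
  by apply/esym/negbTE/eqP => -[Ec Ed]; move: Hij; rewrite Ec Ed !leq_addl.
Qed.

Lemma mem_mmul_rt x i j b :
  (b \in val (mmul x (rt i j))) = dvd_rt i j b && (div_rt i j b \in val x).
Proof.
rewrite mem_mk.
have -> : forall L : seq (option Basis),
    count_mem b (pmap id L) = count (fun o => o == Some b) L.
  by elim=> [|[a|] L IH] //=; rewrite IH.
have -> : [seq mulB a c | a <- val x, c <- val (rt i j)]
          = [seq mulB a (true, i, j) | a <- val x].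
  by elim: (val x) => //= a s ->.
rewrite count_map (eq_count (a2 := fun a => dvd_rt i j b && (a == div_rt i j b)));
  last by move=> a; rewrite /= mulB_rtE.
case: (dvd_rt i j b); last by rewrite count_pred0.
rewrite (eq_count (a2 := pred1 (div_rt i j b))) // count_uniq_mem ?val_M2_uniq //.
by case: (div_rt i j b \in val x).
Qed.

Lemma mmul_rtDl x y i j :
  mmul (madd x y) (rt i j) = madd (mmul x (rt i j)) (mmul y (rt i j)).
Proof.
apply: eq_M2 => b; rewrite mem_madd !mem_mmul_rt mem_madd.
by case: (dvd_rt i j b).
Qed.

Definition sum_monos (l : seq Basis) : M2 := foldr madd m0 (map mono l).

Lemma sum_monos_cons b l : sum_monos (b :: l) = madd (mono b) (sum_monos l).
Proof. by []. Qed.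

Lemma mem_sum_monos l : uniq l -> val (sum_monos l) =i l.
Proof.
elim: l => [|c l IH] // /andP[Hc Ul] b.
rewrite sum_monos_cons mem_madd IH // !inE.
by case: eqP => // ->; rewrite (negbTE Hc).
Qed.

Lemma sum_monos_val x : sum_monos (val x) = x.
Proof. by apply: eq_M2 => b; rewrite mem_sum_monos ?val_M2_uniq. Qed.

Lemma deg_inj : injective deg.
Proof.
by case=> [[[] m n]] [[[] m' n']] /= [Hm Hn]; try congr (_, _, _); lia.
Qed.

Lemma homog_mono d y : homog d y -> y = m0 \/ exists c, y = mono c.
Proof.
case: y => [[|c [|c' s]]] Hs Hd.
- by left; apply: val_inj.
- by right; exists c; apply: val_inj.
- have /andP[Hc _] := val_M2_uniq (exist _ [:: c, c' & s] Hs).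
  move: Hd => /and3P[/eqP Ec /eqP Ec' _].
  by case/negP: Hc; rewrite (deg_inj (etrans Ec (esym Ec'))) mem_head.
Qed.

Lemma comp_mono (x : M2) b : b \in val x -> Defs.comp (deg b) x = mono b.
Proof.
move=> Hb; rewrite /Defs.comp (eq_in_filter (a2 := pred1 b)).
  by rewrite filter_pred1_uniq ?val_M2_uniq // mk_mono.
by move=> c _ /=; apply/eqP/eqP => [/deg_inj|->].
Qed.

Lemma ex_least_nat (P : nat -> Prop) :
  (exists n, P n) -> exists n, P n /\ forall k, P k -> n <= k.
Proof.
move=> [n Pn]; apply: NNPP => Hno.
suff : forall N k, k < N -> ~ P k by move/(_ n.+1 n (ltnSn n)).
elim=> [//|N IH] k; rewrite ltnS leq_eqVlt => /orP[/eqP -> PN|/IH //].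
apply: Hno; exists N; split=> // k' Pk'; rewrite leqNgt; apply/negP => ltN.
exact: IH ltN Pk'.
Qed.

Definition above_some (L : seq (nat * nat)) (m n : nat) : Prop :=
  exists2 ij, ij \in L & (ij.1 <= m) && (ij.2 <= n).

(* For each first coordinate below k, the least second coordinate in S. *)
Lemma dickson_columns (S : nat -> nat -> Prop) k : exists L : seq (nat * nat),
  (forall ij, ij \in L -> S ij.1 ij.2) /\
  (forall m n, S m n -> m < k -> above_some L m n).
Proof.
elim: k => [|k [L [SL HL]]]; first by exists [::].
have [/ex_least_nat [n0 [Sn0 n0_min]] | Hno] := classic (exists n, S k n).
- exists ((k, n0) :: L); split.
    by move=> ij; rewrite in_cons => /orP[/eqP -> //|/SL].
  move=> m n Smn; rewrite ltnS leq_eqVlt => /orP[/eqP Em|ltmk].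
    by exists (k, n0); rewrite ?mem_head //= Em leqnn n0_min // -Em.
  by have [ij Hij Hle] := HL _ _ Smn ltmk; exists ij; rewrite // in_cons Hij orbT.
- exists L; split=> // m n Smn; rewrite ltnS leq_eqVlt => /orP[/eqP Em|]; last exact: HL.
  by case: Hno; exists n; rewrite -Em.
Qed.

Lemma dickson (S : nat -> nat -> Prop) i0 j0 : S i0 j0 -> exists L : seq (nat * nat),
  (forall ij, ij \in L -> S ij.1 ij.2) /\ (forall m n, S m n -> above_some L m n).
Proof.
move=> S0.
have [L1 [SL1 HL1]] := dickson_columns S i0.
have [L2 [SL2 HL2]] := dickson_columns (fun a b => S b a) j0.
exists ((i0, j0) :: L1 ++ map (fun ij => (ij.2, ij.1)) L2); split.
  move=> ij; rewrite in_cons mem_cat.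
  by case/orP=> [/eqP -> //|/orP[/SL1 //|/mapP[ij' /SL2 ? ->] //]].
move=> m n Smn; case: (ltnP m i0) => [ltm|lem].
  have [ij Hij Hle] := HL1 _ _ Smn ltm.
  by exists ij; rewrite // in_cons mem_cat Hij orbT.
case: (ltnP n j0) => [ltn|len]; last by exists (i0, j0); rewrite ?mem_head //= lem len.
have [ij Hij Hle] := HL2 _ _ Smn ltn.
exists (ij.2, ij.1); last by rewrite /= andbC.
by rewrite in_cons mem_cat map_f ?orbT.
Qed.

Definition rts (L : seq (nat * nat)) : seq M2 := map (fun ij => rt ij.1 ij.2) L.

Definition lincomb (cs gs : seq M2) : M2 :=
  foldr madd m0 [seq mmul c.1 c.2 | c <- zip cs gs].

Lemma lincomb_add L cs cs' : size cs = size L -> size cs' = size L ->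
  madd (lincomb cs (rts L)) (lincomb cs' (rts L)) =
  lincomb [seq madd c.1 c.2 | c <- zip cs cs'] (rts L).
Proof.
elim: L cs cs' => [|ij L IH] [|c cs] [|c' cs'] //=; first by rewrite maddxx.
move=> /succn_inj Hcs /succn_inj Hcs'.
by rewrite /lincomb /= -!/(lincomb _ _) -IH // mmul_rtDl maddACA.
Qed.

Lemma lincomb0 L : lincomb (nseq (size L) m0) (rts L) = m0.
Proof. by elim: L => //= ij L IH; rewrite /lincomb /= -/(lincomb _ _) IH mmul0l madd0l. Qed.

Lemma gen_by_rts0 L : gen_by (rts L) m0.
Proof.
by exists (nseq (size L) m0); rewrite size_nseq size_map; split=> //; rewrite -/(lincomb _ _) lincomb0.
Qed.

Lemma gen_by_rtsD L x y :
  gen_by (rts L) x -> gen_by (rts L) y -> gen_by (rts L) (madd x y).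
Proof.
rewrite /gen_by size_map => -[cs [Hcs ->]] [cs' [Hcs' ->]].
exists [seq madd c.1 c.2 | c <- zip cs cs']; split; last exact: lincomb_add.
by rewrite size_map size1_zip ?Hcs ?Hcs'.
Qed.

Lemma gen_by_rts_mul L ij c : ij \in L -> gen_by (rts L) (mmul c (rt ij.1 ij.2)).
Proof.
rewrite /gen_by size_map; elim: L => [//|ij' L IH].
rewrite in_cons => /orP[/eqP <-|/IH [cs [Hcs E]]].
  exists (c :: nseq (size L) m0); rewrite /= size_nseq; split=> //.
  by have := lincomb0 L; rewrite /lincomb /rts /= => ->; rewrite madd0r.
by exists (m0 :: cs); rewrite /= Hcs mmul0l madd0l.
Qed.

Lemma gen_by_rts_rt L m n : above_some L m n -> gen_by (rts L) (rt m n).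
Proof.
move=> [[i j] Hij /andP[Hi Hj]].
have <- : mmul (rt (m - i) (n - j)) (rt i j) = rt m n by rewrite mmul_mono /= !subnK.
exact: gen_by_rts_mul Hij.
Qed.

Lemma gen_by_rts_th L ij c d : ij \in L -> gen_by (rts L) (th c d).
Proof. by rewrite -(th_mul_rt c d ij.1 ij.2); exact: gen_by_rts_mul. Qed.

Lemma gen_by_rts_sum_monos L l :
  (forall b, b \in l -> gen_by (rts L) (mono b)) -> gen_by (rts L) (sum_monos l).
Proof.
elim: l => [|b l IH] Hl; first exact: gen_by_rts0.
rewrite sum_monos_cons; apply: gen_by_rtsD; first by apply: Hl; rewrite mem_head.
by apply: IH => c Hc; apply: Hl; rewrite in_cons Hc orbT.
Qed.

Section BigradedIdeal.

Variable J : M2 -> Prop.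
Hypothesis HJ : bigraded_ideal J.

Lemma ideal_mono x b : J x -> b \in val x -> J (mono b).
Proof. by case: HJ => _ _ _ Jcomp Jx Hb; rewrite -(comp_mono Hb); apply: Jcomp. Qed.

Lemma ideal_sum_monos l : (forall b, b \in l -> J (mono b)) -> J (sum_monos l).
Proof.
case: HJ => J0 Jadd _ _; elim: l => [//|c l IH] Hl /=.
by apply: Jadd; [apply: Hl; rewrite mem_head | apply: IH => b Hb; apply: Hl; rewrite in_cons Hb orbT].
Qed.

Lemma ideal_th i j c d : J (rt i j) -> J (th c d).
Proof. by case: HJ => _ _ Jmul _ Jrt; rewrite -(th_mul_rt c d i j); apply: Jmul. Qed.

Lemma ideal_gen_by_rts L x :
  (forall ij, ij \in L -> J (rt ij.1 ij.2)) -> gen_by (rts L) x -> J x.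
Proof.
case: HJ => J0 Jadd Jmul _ SL [cs [Hcs ->]]; rewrite size_map in Hcs.
elim: L cs Hcs SL => [|ij L IH] [|c cs] //= Hcs SL.
apply: Jadd; first by apply: Jmul; apply: SL; rewrite mem_head.
by apply: IH => [|ij' Hij']; [exact: succn_inj | apply: SL; rewrite in_cons Hij' orbT].
Qed.

Lemma typeI_of_rt i j : J (rt i j) -> typeI J.
Proof.
move=> Jrt; have [L [SL HL]] := @dickson (fun m n => J (rt m n)) _ _ Jrt.
have [ij Hij _] := HL _ _ Jrt.
split.
  exists (rts L); split.
    move=> g /mapP[ij' _ ->]; split=> //.
    by exists (deg (true, ij'.1, ij'.2)); rewrite /homog /= eqxx.
  move=> x; split=> [Jx | ]; last exact: ideal_gen_by_rts.
  rewrite -(sum_monos_val x); apply: gen_by_rts_sum_monos => -[[[] m n]] Hb.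
    exact/gen_by_rts_rt/HL/(ideal_mono Jx Hb).
  exact: gen_by_rts_th Hij.
move=> x Hx; rewrite -(sum_monos_val x); apply: ideal_sum_monos => b Hb.
by move: Hx => /allP/(_ b Hb); case: b {Hb} => [[[] c d]] // _; exact: ideal_th Jrt.
Qed.

Lemma typeII_rt m n : typeII J -> ~ J (rt m n).
Proof. by move=> HII /HII /(_ isT); exact: mono_neq0. Qed.

Lemma not_typeII_rt : ~ typeII J -> exists m n, J (rt m n).
Proof.
move=> HnII; have [x [Jx Px nx]] : exists x, [/\ J x, inPlus x & x <> m0].
  apply: NNPP => Hno; apply: HnII => x Jx Px; apply: NNPP => nx.
  by apply: Hno; exists x.
have [b Hb] : exists b, b \in val x.
  case Ex: (val x) => [|b l]; last by exists b; rewrite mem_head.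
  by case: nx; apply: val_inj; rewrite Ex.
have := allP Px b Hb; case: b Hb => [[[] m n]] Hb // _.
by exists m, n; exact: ideal_mono Jx Hb.
Qed.

Variables (p q : int) (f : M2 -> M2).
Hypothesis Hf : bigraded_hom J p q f.

Lemma hom0 : f m0 = m0.
Proof.
case: HJ Hf => J0 _ _ _ [fadd _ _].
by have := fadd m0 m0 J0 J0; rewrite !maddxx.
Qed.

Lemma hom_mono b : J (mono b) -> f (mono b) = m0 \/ exists c, f (mono b) = mono c.
Proof.
case: Hf => _ _ fhom Jb; apply: homog_mono (fhom (deg b).1 (deg b).2 _ Jb _).
by rewrite /homog /= -surjective_pairing eqxx.
Qed.

Lemma hom_ann r b c : J (mono b) -> f (mono b) = mono c ->
  mulB r b = None -> mulB r c = None.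
Proof.
case: Hf => _ fmul _ Jb fb rb; have := fmul (mono r) _ Jb.
rewrite fb !mmul_mono rb hom0.
by case: (mulB r c) => // d /esym /mono_neq0.
Qed.

Lemma hom_nonzero_mono : (exists x, J x /\ f x <> m0) ->
  exists u, J (mono u) /\ f (mono u) <> m0.
Proof.
case: HJ Hf => _ Jadd _ _ [fadd _ _] [x [Jx fx]]; apply: NNPP => Hno; apply: fx.
have Jval := ideal_mono Jx; rewrite -(sum_monos_val x).
elim: (val x) Jval => [|b l IH] Jl; first exact: hom0.
have Jb : J (mono b) by apply: Jl; rewrite mem_head.
have Jl' : forall c, c \in l -> J (mono c) by move=> c Hc; apply: Jl; rewrite in_cons Hc orbT.
have fb : f (mono b) = m0 by apply: NNPP => fb; apply: Hno; exists b.
have Jsum := ideal_sum_monos Jl'.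
by rewrite sum_monos_cons fadd // fb IH // maddxx.
Qed.

Lemma hom_rt_nonzero i j u : J (rt i j) -> J (mono u) -> f (mono u) <> m0 ->
  exists m n, J (rt m n) /\ f (rt m n) <> m0.
Proof.
case: Hf => _ fmul _ Jrt; case: u => [[[] c d]] Ju fu; first by exists c, d.
exists i, j; split=> // fij; apply: fu; change (f (th c d) = m0).
by rewrite -(th_mul_rt c d i j) fmul // fij mmul0r.
Qed.

Lemma hom_rt m n : J (rt m n) -> f (rt m n) <> m0 ->
  (exists a b, [/\ m <= a, n <= b & f (rt m n) = rt a b]) \/
  (exists a b, f (rt m n) = th a b).
Proof.
move=> Jmn; case: (hom_mono Jmn) => [//|[[[[] a] b] fmn]] _; last by right; exists a, b.
left; exists a, b; split=> //; rewrite leqNgt; apply/negP => lt.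
- have := hom_ann (r := (false, a, b + n)) Jmn fmn; rewrite /= leqnn leq_addl leq_addr.
  by rewrite leqNgt lt => /(_ erefl).
- have := hom_ann (r := (false, a + m, b)) Jmn fmn; rewrite /= leqnn leq_addr andbT.
  by rewrite [n <= b]leqNgt lt andbF => /(_ erefl).
Qed.

Lemma typeII_hom_th u : typeII J -> J (mono u) -> f (mono u) <> m0 ->
  exists m n a b, [/\ J (th m n), a <= m, b <= n & f (th m n) = th a b].
Proof.
move=> HII; case: u => [[[] m n]] Ju fu; first by case: (typeII_rt HII Ju).
case: (hom_mono Ju) => [//|[[[tc a] b] fmn]].
have ann_rho := hom_ann (r := (true, m.+1, 0)) Ju fmn.
have ann_tau := hom_ann (r := (true, 0, n.+1)) Ju fmn.
case: tc fmn ann_rho ann_tau => fmn /=; rewrite !ltnn ?andbF //=.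
  by move/(_ erefl).
move=> /(_ erefl) ann_rho /(_ erefl) ann_tau.
exists m, n, a, b; split=> //; rewrite leqNgt; apply/negP => lt.
- by move: ann_rho; rewrite lt.
- by move: ann_tau; rewrite lt.
Qed.

End BigradedIdeal.

Theorem lemmaA2 (J : M2 -> Prop) (p q : int) (f : M2 -> M2) :
  bigraded_ideal J -> bigraded_hom J p q f ->
  (exists x, J x /\ f x <> m0) ->
  let caseI :=
    typeI J /\
    ((exists m n a b : nat,
        [/\ J (rt m n), (m <= a)%N, (n <= b)%N & f (rt m n) = rt a b]) \/
     (exists m n a b : nat, J (rt m n) /\ f (rt m n) = th a b)) in
  let caseII :=
    typeII J /\
    (exists m n a b : nat,
        [/\ J (th m n), (a <= m)%N, (b <= n)%N & f (th m n) = th a b]) in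
  (caseI /\ ~ caseII) \/ (~ caseI /\ caseII).
Proof.
move=> HJ Hf nz /=.
have [u [Ju fu]] := hom_nonzero_mono HJ Hf nz.
have [HII | HnII] := classic (typeII J).
  right; split; last by split; last exact: (typeII_hom_th HJ Hf HII Ju fu).
  by case=> _ [[m [n [a [b [Jmn _ _ _]]]]] | [m [n [a [b [Jmn _]]]]]];
    exact: typeII_rt HII Jmn.
left; split; last by case.
have [i [j Jij]] := not_typeII_rt HJ HnII.
split; first exact: typeI_of_rt Jij.
have [m [n [Jmn fmn]]] := hom_rt_nonzero Hf Jij Ju fu.
case: (hom_rt HJ Hf Jmn fmn) => [[a [b [Ha Hb E]]] | [a [b E]]].
- by left; exists m, n, a, b.
- by right; exists m, n, a, b.
Qed.
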